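(* Let $({\bf x}_i,y_i)$, $i=1,\dots,n$, with $y_i\in\{\pm1\}$, and let $\lambda_1>0$, $\lambda_2\ge0$, $\lambda_3>0$, $\delta>0$. Let $f(b,{\bf w})=\frac1n\sum_i\phi_H(y_i(b+{\bf x}_i^\top{\bf w}))$, $L_f=\frac{1}{n\delta}\sum_i y_i^2(1+\|{\bf x}_i\|^2)$, and let ${\bf u}^*=(b^*,{\bf w}^* )$ be the unique minimizer of $F(b,{\bf w})=f(b,{\bf w})+\lambda_1\|{\bf w}\|_1+\frac{\lambda_2}{2}\|{\bf w}\|^2+\frac{\lambda_3}{2}b^2$. Starting from any ${\bf u}^0=(b^0,{\bf w}^0)$, let $$b^k=\frac{L_f b^{k-1}-\nabla_b f({\bf u}^{k-1})}{L_f+\lambda_3},\qquad {\bf w}^k=\frac{1}{L_f+\lambda_2}\mathcal{S}_{\lambda_1}\big(L_f{\bf w}^{k-1}-\nabla_{\bf w}f({\bf u}^{k-1})\big),\quad k\ge1.$$ Let $Q(b,{\bf w})=f(b,{\bf w})+\frac{\lambda_2}{2}\|{\bf w}\|^2+\frac{\lambda_3}{2}b^2$, $h_i({\bf u})=w_i-\frac{1}{L_f+\lambda_2}\nabla_{w_i}Q({\bf u})$ for ${\bf u}=(b,{\bf w})$, and $$\mathcal{I}=\{i:|\nabla_{w_i}Q({\bf u}^* )|<\lambda_1\},\qquad \mathcal{E}=\{i:|\nabla_{w_i}Q({\bf u}^* )|=\lambda_1\}.$$ Then $\mathrm{supp}({\bf w}^* )\subset\mathcal{E}$ and $w_i^*=0$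 for all $i\in\mathcal{I}$. Moreover, for all but finitely many $k$, $w_i^k=0$ for all $i\in\mathcal{I}$ and $\mathrm{sign}(h_i({\bf u}^k))=\mathrm{sign}(h_i({\bf u}^* ))$ for all $i\in\mathcal{E}$.
   Context: $\phi_H$ is the huberized hinge loss: $\phi_H(t)=0$ for $t>1$, $\frac{(1-t)^2}{2\delta}$ for $1-\delta<t\le1$, $1-t-\frac\delta2$ for $t\le1-\delta$. $\mathcal{S}_\nu(t)=\mathrm{sign}(t)\max(|t|-\nu,0)$ componentwise. $w_i$ denotes the $i$-th component of ${\bf w}$ and $\mathrm{supp}({\bf w})=\{i:w_i\neq0\}$. The iteration above is the proximal gradient method with constant step parameter $L_f$ and no extrapolation. *)

From Stdlib Require Import Reals Lra List.
Open Scope R_scope.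

Definition sumR (m : nat) (g : nat -> R) : R :=
  fold_right Rplus 0 (map g (seq 0 m)).

Definition phiH (delta t : R) : R :=
  if Rlt_dec 1 t then 0
  else if Rlt_dec (1 - delta) t then (1 - t) ^ 2 / (2 * delta)
  else 1 - t - delta / 2.

Definition dphiH (delta t : R) : R :=
  if Rlt_dec 1 t then 0
  else if Rlt_dec (1 - delta) t then - (1 - t) / delta
  else -1.

(* Data: n samples, p features; x i j = j-th coordinate of x_i (i<n, j<p). *)
Definition margin (p : nat) (x : nat -> nat -> R) (y : nat -> R)
  (i : nat) (b : R) (w : nat -> R) : R :=
  y i * (b + sumR p (fun j => x i j * w j)).

Definition fobj (n p : nat) (x : nat -> nat -> R) (y : nat -> R) (delta : R)
  (b : R) (w : nat -> R) : R :=
  / INR n * sumR n (fun i => phiH delta (margin p x y i b w)).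

Definition grad_b (n p : nat) (x : nat -> nat -> R) (y : nat -> R) (delta : R)
  (b : R) (w : nat -> R) : R :=
  / INR n * sumR n (fun i => y i * dphiH delta (margin p x y i b w)).

Definition grad_w (n p : nat) (x : nat -> nat -> R) (y : nat -> R) (delta : R)
  (b : R) (w : nat -> R) (j : nat) : R :=
  / INR n * sumR n (fun i => y i * x i j * dphiH delta (margin p x y i b w)).

Definition norm1 (p : nat) (w : nat -> R) : R := sumR p (fun j => Rabs (w j)).
Definition sqnorm (p : nat) (w : nat -> R) : R := sumR p (fun j => w j ^ 2).

Definition Fobj (n p : nat) (x : nat -> nat -> R) (y : nat -> R)
  (delta l1 l2 l3 : R) (b : R) (w : nat -> R) : R :=
  fobj n p x y delta b w + l1 * norm1 p w + l2 / 2 * sqnorm p w + l3 / 2 * b ^ 2.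

Definition Lf (n p : nat) (x : nat -> nat -> R) (y : nat -> R) (delta : R) : R :=
  / (INR n * delta) * sumR n (fun i => y i ^ 2 * (1 + sqnorm p (x i))).

Definition sign (t : R) : R :=
  if Rlt_dec 0 t then 1 else if Rlt_dec t 0 then -1 else 0.
Definition shrink (nu t : R) : R := sign t * Rmax (Rabs t - nu) 0.

Definition gradQ_w (n p : nat) (x : nat -> nat -> R) (y : nat -> R)
  (delta l2 : R) (b : R) (w : nat -> R) (j : nat) : R :=
  grad_w n p x y delta b w j + l2 * w j.

Definition hfun (n p : nat) (x : nat -> nat -> R) (y : nat -> R)
  (delta l2 : R) (b : R) (w : nat -> R) (j : nat) : R :=
  w j - / (Lf n p x y delta + l2) * gradQ_w n p x y delta l2 b w j.

From Stdlib Require Import Reals Lra List.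
From Stdlib Require Import Lia Psatz ClassicalEpsilon.
Open Scope R_scope.

(* Each iteration is a proximal gradient step for F = f + g, where grad f is
   L_f-Lipschitz and g = l1 |w|_1 + l2/2 |w|^2 + l3/2 b^2 is separable. The three-point inequality of proximal gradient shows that
   the squared distance D_k from u^k to u* is nonincreasing and that F(u^k)
   tends to F at u*. The bounded iterates have a cluster point, which minimizes
   F by continuity and hence is u*; so D_k -> 0 and u^k -> u*.
   The minimizer is a fixed point of the step, w*_i = S_l1(c_i) / (L_f + l2)
   with c_i = L_f w*_i - grad_{w_i} f at u*, and grad_{w_i} Q at u* equals
   (L_f + l2) w*_i - c_i: a nonzero w*_i forces |c_i| > l1 and
   |grad_{w_i} Q| = l1, while on I one gets |c_i| < l1. As the step arguments
   L_f w^k_i - grad_{w_i} f(u^k) tend to c_i, they eventually lie in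
   ]-l1, l1[ for i in I, which zeroes w^{k+1}_i, and for i in E they eventually
   have the sign of c_i <> 0, which is the sign of h_i at u^k and at u*. *)

Lemma sumR_S m g : sumR (S m) g = sumR m g + g m.
Proof.
  unfold sumR. rewrite seq_S, map_app, fold_right_app. simpl.
  generalize (map g (seq 0 m)). intros l.
  induction l as [|h t IH]; simpl; [lra | rewrite IH; lra].
Qed.

Lemma sumR_ext m g h : (forall j, (j < m)%nat -> g j = h j) -> sumR m g = sumR m h.
Proof.
  induction m as [|m IH]; intros H; [reflexivity|].
  rewrite !sumR_S, IH by (intros; apply H; lia). now rewrite H by lia.
Qed.

Lemma sumR_zero m : sumR m (fun _ => 0) = 0.
Proof. induction m as [|m IH]; [reflexivity|]. rewrite sumR_S, IH. lra. Qed.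

Lemma sumR_plus m g h : sumR m (fun j => g j + h j) = sumR m g + sumR m h.
Proof. induction m as [|m IH]; [unfold sumR; simpl; lra|]. rewrite !sumR_S, IH. lra. Qed.

Lemma sumR_minus m g h : sumR m (fun j => g j - h j) = sumR m g - sumR m h.
Proof. induction m as [|m IH]; [unfold sumR; simpl; lra|]. rewrite !sumR_S, IH. lra. Qed.

Lemma sumR_scal_l m c g : sumR m (fun j => c * g j) = c * sumR m g.
Proof. induction m as [|m IH]; [unfold sumR; simpl; lra|]. rewrite !sumR_S, IH. lra. Qed.

Lemma sumR_scal_r m c g : sumR m (fun j => g j * c) = sumR m g * c.
Proof. rewrite Rmult_comm, <- sumR_scal_l. apply sumR_ext. intros; ring. Qed.

Lemma sumR_le m g h : (forall j, (j < m)%nat -> g j <= h j) -> sumR m g <= sumR m h.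
Proof.
  induction m as [|m IH]; intros H; [unfold sumR; simpl; lra|]. rewrite !sumR_S.
  assert (sumR m g <= sumR m h) by (apply IH; intros; apply H; lia).
  assert (g m <= h m) by (apply H; lia). lra.
Qed.

Lemma sumR_nonneg m g : (forall j, (j < m)%nat -> 0 <= g j) -> 0 <= sumR m g.
Proof. intros H. rewrite <- (sumR_zero m). now apply sumR_le. Qed.

Lemma sumR_term_le m g j :
  (forall i, (i < m)%nat -> 0 <= g i) -> (j < m)%nat -> g j <= sumR m g.
Proof.
  induction m as [|m IH]; intros H Hj; [lia|]. rewrite sumR_S.
  destruct (Nat.eq_dec j m) as [->|Hne].
  - assert (0 <= sumR m g) by (apply sumR_nonneg; intros; apply H; lia). lra.
  - assert (g j <= sumR m g) by (apply IH; [intros; apply H|]; lia).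
    assert (0 <= g m) by (apply H; lia). lra.
Qed.

Lemma sumR_swap n p (F : nat -> nat -> R) :
  sumR n (fun i => sumR p (fun j => F i j)) = sumR p (fun j => sumR n (fun i => F i j)).
Proof.
  induction n as [|n IH].
  - transitivity (sumR p (fun _ => 0)); [now rewrite sumR_zero | now apply sumR_ext].
  - rewrite sumR_S, IH, <- sumR_plus. apply sumR_ext. intros. now rewrite sumR_S.
Qed.

Lemma cauchy_schwarz_step P A C a c :
  P ^ 2 <= A * C -> 0 <= A -> 0 <= C -> (P + a * c) ^ 2 <= (A + a ^ 2) * (C + c ^ 2).
Proof.
  intros HP HA HC.
  assert (Hcross : 2 * P * (a * c) <= a ^ 2 * C + c ^ 2 * A).
  { assert (Hsq : (2 * P * (a * c)) ^ 2 <= (a ^ 2 * C + c ^ 2 * A) ^ 2).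
    { assert (P ^ 2 * (a ^ 2 * c ^ 2) <= A * C * (a ^ 2 * c ^ 2))
        by (apply Rmult_le_compat_r; nra).
      pose proof (pow2_ge_0 (a ^ 2 * C - c ^ 2 * A)). nra. }
    assert (0 <= a ^ 2 * C + c ^ 2 * A) by (pose proof (pow2_ge_0 a); pose proof (pow2_ge_0 c); nra).
    nra. }
  nra.
Qed.

Lemma sumR_cauchy_schwarz m (a c : nat -> R) a0 c0 :
  (a0 * c0 + sumR m (fun j => a j * c j)) ^ 2 <=
  (a0 ^ 2 + sumR m (fun j => a j ^ 2)) * (c0 ^ 2 + sumR m (fun j => c j ^ 2)).
Proof.
  induction m as [|m IH]; [unfold sumR; simpl; nra|].
  rewrite !sumR_S.
  rewrite <- (Rplus_assoc (a0 * c0)), <- (Rplus_assoc (a0 ^ 2)), <- (Rplus_assoc (c0 ^ 2)).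
  apply cauchy_schwarz_step; [exact IH| |];
    apply Rplus_le_le_0_compat; try apply pow2_ge_0;
    apply sumR_nonneg; intros; apply pow2_ge_0.
Qed.

Lemma Rabs_le_iff t c : Rabs t <= c <-> -c <= t <= c.
Proof. unfold Rabs; destruct Rcase_abs; split; intros; lra. Qed.

Lemma phiH_tangent_bounds delta t s : 0 < delta ->
  phiH delta t + dphiH delta t * (s - t) <= phiH delta s /\
  phiH delta s <= phiH delta t + dphiH delta t * (s - t) + (s - t) ^ 2 / (2 * delta).
Proof.
  intros Hd. unfold phiH, dphiH.
  destruct (Rlt_dec 1 t), (Rlt_dec 1 s);
    try destruct (Rlt_dec (1 - delta) t); try destruct (Rlt_dec (1 - delta) s);
    split; apply (Rmult_le_reg_l (2 * delta)); try lra;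
    field_simplify; try lra; try nra; pose proof (pow2_ge_0 (s - t)); nra.
Qed.

Lemma dphiH_abs_le1 delta t : 0 < delta -> Rabs (dphiH delta t) <= 1.
Proof.
  intros Hd. apply Rabs_le_iff. unfold dphiH.
  destruct (Rlt_dec 1 t); [lra|]. destruct (Rlt_dec (1 - delta) t); [|lra].
  split; apply (Rmult_le_reg_l delta); try lra; field_simplify; lra.
Qed.

Lemma phiH_lipschitz delta t s : 0 < delta ->
  Rabs (phiH delta s - phiH delta t) <= 1 * Rabs (s - t).
Proof.
  intros Hd. rewrite Rmult_1_l.
  destruct (phiH_tangent_bounds delta t s Hd) as [Ht _].
  destruct (phiH_tangent_bounds delta s t Hd) as [Hs _].
  assert (Hlin : forall u v, Rabs (dphiH delta u * v) <= Rabs v).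
  { intros u v. rewrite Rabs_mult.
    pose proof (dphiH_abs_le1 delta u Hd). pose proof (Rabs_pos v). nra. }
  pose proof (Hlin t (s - t)) as Hts. pose proof (Hlin s (t - s)) as Hst.
  rewrite Rabs_minus_sym in Hst.
  apply Rabs_le_iff. apply Rabs_le_iff in Hts. apply Rabs_le_iff in Hst. lra.
Qed.

Lemma dphiH_lipschitz delta t s : 0 < delta ->
  Rabs (dphiH delta s - dphiH delta t) <= / delta * Rabs (s - t).
Proof.
  intros Hd. unfold dphiH.
  destruct (Rle_dec s t);
    [rewrite (Rabs_left1 (s - t)) by lra | rewrite (Rabs_pos_eq (s - t)) by lra];
    rewrite Rabs_le_iff;
    destruct (Rlt_dec 1 t), (Rlt_dec 1 s);
    try destruct (Rlt_dec (1 - delta) t); try destruct (Rlt_dec (1 - delta) s);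
    split; apply (Rmult_le_reg_l delta); try lra; field_simplify; try lra; nra.
Qed.

Definition sqdist (p : nat) (b : R) (w : nat -> R) (b' : R) (w' : nat -> R) : R :=
  (b - b') ^ 2 + sumR p (fun j => (w j - w' j) ^ 2).

Lemma sqdist_b_le p b w b' w' : (b - b') ^ 2 <= sqdist p b w b' w'.
Proof.
  unfold sqdist.
  assert (0 <= sumR p (fun j => (w j - w' j) ^ 2)) by (apply sumR_nonneg; intros; apply pow2_ge_0).
  lra.
Qed.

Lemma sqdist_w_le p b w b' w' j : (j < p)%nat -> (w j - w' j) ^ 2 <= sqdist p b w b' w'.
Proof.
  intros Hj. unfold sqdist. pose proof (pow2_ge_0 (b - b')).
  assert ((w j - w' j) ^ 2 <= sumR p (fun j => (w j - w' j) ^ 2))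
    by (apply (sumR_term_le p (fun j => (w j - w' j) ^ 2)); auto; intros; apply pow2_ge_0).
  lra.
Qed.

Lemma sqdist_nonneg p b w b' w' : 0 <= sqdist p b w b' w'.
Proof. eapply Rle_trans; [apply pow2_ge_0 | apply sqdist_b_le]. Qed.

Lemma sqdist_eq0 p b w b' w' :
  b = b' -> (forall j, (j < p)%nat -> w j = w' j) -> sqdist p b w b' w' = 0.
Proof.
  intros -> Hw. unfold sqdist. rewrite (sumR_ext _ _ (fun _ => 0)), sumR_zero.
  - ring.
  - intros j Hj. rewrite Hw by exact Hj. ring.
Qed.

Lemma margin_sub p x y i b w b' w' :
  margin p x y i b' w' - margin p x y i b w =
  y i * ((b' - b) + sumR p (fun j => x i j * (w' j - w j))).
Proof.
  unfold margin.
  replace (sumR p (fun j => x i j * (w' j - w j))) with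
    (sumR p (fun j => x i j * w' j) - sumR p (fun j => x i j * w j)); [ring|].
  rewrite <- sumR_minus. apply sumR_ext. intros; ring.
Qed.

Lemma grad_inner_margin n p x y delta b w b' w' :
  grad_b n p x y delta b w * (b' - b)
  + sumR p (fun j => grad_w n p x y delta b w j * (w' j - w j))
  = / INR n * sumR n (fun i => dphiH delta (margin p x y i b w) *
                               (margin p x y i b' w' - margin p x y i b w)).
Proof.
  set (D := fun i => dphiH delta (margin p x y i b w)).
  assert (Hb : grad_b n p x y delta b w * (b' - b)
               = / INR n * sumR n (fun i => y i * D i * (b' - b))).
  { unfold grad_b, D. rewrite sumR_scal_r. ring. }
  assert (Hw : sumR p (fun j => grad_w n p x y delta b w j * (w' j - w j))
               = / INR n * sumR p (fun j => sumR n (fun i => y i * x i j * D i * (w' j - w j)))).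
  { rewrite <- sumR_scal_l. apply sumR_ext. intros. unfold grad_w, D. rewrite sumR_scal_r. ring. }
  rewrite Hb, Hw, <- Rmult_plus_distr_l. f_equal.
  rewrite <- sumR_swap, <- sumR_plus. apply sumR_ext. intros i _.
  rewrite margin_sub.
  replace (sumR p (fun j => y i * x i j * D i * (w' j - w j)))
    with (y i * D i * sumR p (fun j => x i j * (w' j - w j)))
    by (rewrite <- sumR_scal_l; apply sumR_ext; intros; ring).
  fold (D i). ring.
Qed.

Lemma INR_pos n : (0 < n)%nat -> 0 < INR n.
Proof. intros. apply lt_0_INR. lia. Qed.

Lemma Lf_pos n p x y delta : (0 < n)%nat ->
  (forall i, (i < n)%nat -> y i = 1 \/ y i = -1) -> 0 < delta -> 0 < Lf n p x y delta.
Proof.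
  intros Hn Hy Hd. unfold Lf. apply Rmult_lt_0_compat.
  - apply Rinv_0_lt_compat, Rmult_lt_0_compat; [apply INR_pos|]; auto.
  - destruct n as [|m]; [lia|]. rewrite sumR_S.
    assert (Hsq : forall i, 0 <= sqnorm p (x i))
      by (intros; apply sumR_nonneg; intros; apply pow2_ge_0).
    assert (0 <= sumR m (fun i => y i ^ 2 * (1 + sqnorm p (x i)))).
    { apply sumR_nonneg. intros i _. pose proof (Hsq i). pose proof (pow2_ge_0 (y i)). nra. }
    assert (y m ^ 2 = 1) by (destruct (Hy m) as [-> | ->]; [lia | ring | ring]).
    pose proof (Hsq m). nra.
Qed.

(* Cauchy-Schwarz on (1, x_i) bounds the squared change of each margin by
   (1 + |x_i|^2) |u' - u|^2, which is where L_f comes from. *)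
Lemma fobj_tangent_bounds n p x y delta b w b' w' :
  (0 < n)%nat -> (forall i, (i < n)%nat -> y i = 1 \/ y i = -1) -> 0 < delta ->
  let lin := grad_b n p x y delta b w * (b' - b)
             + sumR p (fun j => grad_w n p x y delta b w j * (w' j - w j)) in
  fobj n p x y delta b w + lin <= fobj n p x y delta b' w' /\
  fobj n p x y delta b' w'
    <= fobj n p x y delta b w + lin + Lf n p x y delta / 2 * sqdist p b' w' b w.
Proof.
  intros Hn Hy Hd lin. unfold lin. rewrite grad_inner_margin.
  assert (Hni : 0 < / INR n) by (apply Rinv_0_lt_compat, INR_pos; auto).
  unfold fobj. split.
  - rewrite <- Rmult_plus_distr_l. apply Rmult_le_compat_l; [lra|].
    rewrite <- sumR_plus. apply sumR_le. intros i _. apply phiH_tangent_bounds, Hd.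
  - set (N := sqdist p b' w' b w).
    assert (HL : Lf n p x y delta / 2 * N =
       / INR n * sumR n (fun i => y i ^ 2 * (1 + sqnorm p (x i)) * N / (2 * delta))).
    { unfold Lf. unfold Rdiv at 2. rewrite sumR_scal_r, sumR_scal_r.
      pose proof (INR_pos n Hn). field. lra. }
    rewrite HL, <- !Rmult_plus_distr_l. apply Rmult_le_compat_l; [lra|].
    rewrite <- !sumR_plus. apply sumR_le. intros i _.
    eapply Rle_trans; [apply phiH_tangent_bounds, Hd|]. apply Rplus_le_compat_l.
    unfold Rdiv. apply Rmult_le_compat_r; [apply Rlt_le, Rinv_0_lt_compat; lra|].
    rewrite margin_sub, Rpow_mult_distr, Rmult_assoc.
    apply Rmult_le_compat_l; [apply pow2_ge_0|].
    pose proof (sumR_cauchy_schwarz p (x i) (fun j => w' j - w j) 1 (b' - b)) as HC.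
    unfold N, sqdist, sqnorm. rewrite pow1, !Rmult_1_l in HC. exact HC.
Qed.

Lemma shrink_cases l1 c : 0 < l1 ->
  (l1 < c /\ shrink l1 c = c - l1) \/ (c < -l1 /\ shrink l1 c = c + l1) \/
  (Rabs c <= l1 /\ shrink l1 c = 0).
Proof.
  intros H. unfold shrink, sign, Rmax.
  destruct (Rlt_dec 0 c); [|destruct (Rlt_dec c 0)];
    destruct (Rle_dec (Rabs c - l1) 0); unfold Rabs in *; destruct Rcase_abs;
    try (right; right; split; lra); try (left; split; lra); right; left; split; lra.
Qed.

(* The first-order optimality condition of the one-dimensional problem solved
   by a soft-thresholding step, in variational form. *)
Lemma shrink_prox_ineq l1 l2 L c z : 0 < l1 -> 0 <= l2 -> 0 < L + l2 ->
  let v := / (L + l2) * shrink l1 c in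
  l1 * Rabs v + l2 / 2 * v ^ 2 + (c - L * v) * (z - v) <= l1 * Rabs z + l2 / 2 * z ^ 2.
Proof.
  intros H1 H2 HK v.
  assert (Hv : (L + l2) * v = shrink l1 c) by (unfold v; field; lra).
  assert (Hz : 0 <= l2 * (z - v) ^ 2) by (apply Rmult_le_pos; [lra | apply pow2_ge_0]).
  pose proof (Rle_abs z). pose proof (Rle_abs (- z)). rewrite Rabs_Ropp in *.
  destruct (shrink_cases l1 c H1) as [[Hc Hs]|[[Hc Hs]|[Hc Hs]]]; rewrite Hs in Hv.
  - assert (0 < v) by (apply (Rmult_lt_reg_l (L + l2)); lra).
    rewrite (Rabs_pos_eq v) by lra.
    replace (c - L * v) with (l2 * v + l1) by lra. nra.
  - assert (v < 0) by (apply (Rmult_lt_reg_l (L + l2)); lra).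
    rewrite (Rabs_left v) by lra.
    replace (c - L * v) with (l2 * v - l1) by lra. nra.
  - assert (v = 0) as -> by (apply (Rmult_eq_reg_l (L + l2)); lra).
    rewrite Rabs_R0. apply Rabs_le_iff in Hc. pose proof (pow2_ge_0 z). nra.
Qed.

Lemma ridge_prox_ineq l3 L c z : 0 < L + l3 -> 0 <= l3 ->
  let v := c / (L + l3) in
  l3 / 2 * v ^ 2 + (c - L * v) * (z - v) <= l3 / 2 * z ^ 2.
Proof.
  intros HK H3 v.
  replace (c - L * v) with (l3 * v) by (unfold v; field; lra).
  pose proof (pow2_ge_0 (z - v)). nra.
Qed.

Definition strict_incr (phi : nat -> nat) : Prop := forall k, (phi k < phi (S k))%nat.

Lemma strict_incr_ge phi : strict_incr phi -> forall k, (k <= phi k)%nat.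
Proof. intros H k. induction k; [lia|]. specialize (H k). lia. Qed.

Lemma strict_incr_lt phi : strict_incr phi -> forall i j, (i < j)%nat -> (phi i < phi j)%nat.
Proof.
  intros H i j Hij. induction j as [|j IH]; [lia|].
  destruct (Nat.eq_dec i j) as [->|Hne]; [apply H|]. specialize (H j). specialize (IH ltac:(lia)). lia.
Qed.

Lemma strict_incr_comp phi psi :
  strict_incr phi -> strict_incr psi -> strict_incr (fun k => phi (psi k)).
Proof. intros Hphi Hpsi k. apply strict_incr_lt; auto. Qed.

Lemma Un_cv_subseq phi a l : strict_incr phi -> Un_cv a l -> Un_cv (fun k => a (phi k)) l.
Proof.
  intros Hphi Ha eps He. destruct (Ha eps He) as [N HN]. exists N. intros k Hk.
  apply HN. pose proof (strict_incr_ge phi Hphi k). lia.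
Qed.

Lemma Un_cv_ext a b l : (forall k, a k = b k) -> Un_cv a l -> Un_cv b l.
Proof. intros H Ha eps He. destruct (Ha eps He) as [N HN]. exists N. intros. rewrite <- H. auto. Qed.

Lemma Un_cv_const c : Un_cv (fun _ => c) c.
Proof. intros eps He. exists O. intros. unfold Rdist. rewrite Rminus_diag, Rabs_R0. lra. Qed.

Lemma Un_cv_scal c a l : Un_cv a l -> Un_cv (fun k => c * a k) (c * l).
Proof. intros. apply (CV_mult (fun _ => c)); auto using Un_cv_const. Qed.

Lemma Un_cv_sqr a l : Un_cv a l -> Un_cv (fun k => a k ^ 2) (l ^ 2).
Proof.
  intros H. apply (Un_cv_ext (fun k => a k * a k)); [intros; ring|].
  replace (l ^ 2) with (l * l) by ring. now apply CV_mult.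
Qed.

Lemma Un_cv_lipschitz (g : R -> R) K a l : 0 <= K ->
  (forall s t, Rabs (g s - g t) <= K * Rabs (s - t)) ->
  Un_cv a l -> Un_cv (fun k => g (a k)) (g l).
Proof.
  intros HK Hg Ha eps He. destruct (Ha (eps / (K + 1))) as [N HN].
  { apply Rdiv_lt_0_compat; lra. }
  exists N. intros k Hk. specialize (HN k Hk). unfold Rdist in *.
  eapply Rle_lt_trans; [apply Hg|].
  apply (Rmult_lt_compat_l (K + 1)) in HN; [|lra].
  replace ((K + 1) * (eps / (K + 1))) with eps in HN by (field; lra).
  pose proof (Rabs_pos (a k - l)). nra.
Qed.

Lemma Un_cv_sumR m (A : nat -> nat -> R) l :
  (forall j, (j < m)%nat -> Un_cv (fun k => A k j) (l j)) ->
  Un_cv (fun k => sumR m (A k)) (sumR m l).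
Proof.
  induction m as [|m IH]; intros H.
  - exact (Un_cv_const 0).
  - rewrite sumR_S. apply (Un_cv_ext (fun k => sumR m (A k) + A k m)).
    { intros. now rewrite sumR_S. }
    apply CV_plus; [apply IH; intros; apply H | apply H]; lia.
Qed.

Lemma Un_cv_squeeze a c l : (forall k, l <= a k <= l + c k) -> Un_cv c 0 -> Un_cv a l.
Proof.
  intros H Hc eps He. destruct (Hc eps He) as [N HN]. exists N. intros k Hk.
  specialize (HN k Hk). specialize (H k). unfold Rdist in *.
  rewrite Rminus_0_r in HN. revert HN. unfold Rabs. repeat destruct Rcase_abs; lra.
Qed.

Lemma Un_cv_of_sqr_le t l D : (forall k, (t k - l) ^ 2 <= D k) -> Un_cv D 0 -> Un_cv t l.
Proof.
  intros H HD eps He. destruct (HD (eps ^ 2)) as [N HN]; [apply pow_lt; lra|].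
  exists N. intros k Hk. specialize (HN k Hk). specialize (H k). unfold Rdist in *.
  rewrite Rminus_0_r in HN. pose proof (Rle_abs (D k)).
  rewrite <- pow2_abs in H. pose proof (Rabs_pos (t k - l)). nra.
Qed.

Lemma nonincreasing_bounded_cv D :
  (forall k, D (S k) <= D k) -> (forall k, 0 <= D k) -> exists r, Un_cv D r.
Proof.
  intros Hdec Hpos. destruct (decreasing_cv D Hdec) as [r Hr]; [|now exists r].
  exists 0. intros z [k ->]. unfold opp_seq. specialize (Hpos k). lra.
Qed.

Lemma nonincreasing_le_first D : (forall k, D (S k) <= D k) -> forall k, D k <= D O.
Proof. intros H k. induction k; [lra|]. specialize (H k). lra. Qed.

Lemma eventually_forall_lt p (P : nat -> nat -> Prop) :
  (forall j, (j < p)%nat -> exists N, forall k, (N <= k)%nat -> P j k) ->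
  exists N, forall k, (N <= k)%nat -> forall j, (j < p)%nat -> P j k.
Proof.
  induction p as [|p IH]; intros H.
  - exists O. intros; lia.
  - destruct IH as [N1 H1]; [intros; apply H; lia|].
    destruct (H p ltac:(lia)) as [N2 H2]. exists (Nat.max N1 N2). intros k Hk j Hj.
    destruct (Nat.eq_dec j p) as [->|]; [apply H2 | apply H1]; lia.
Qed.

Fixpoint diag_subseq (sel : nat -> nat -> nat) (k : nat) : nat :=
  match k with
  | O => sel O O
  | S k' => sel (S (diag_subseq sel k')) k
  end.

(* A cluster point (Bolzano-Weierstrass) is turned into the limit of a
   subsequence by choosing, at step k, an index past the previous one within
   distance 1/(k+1) of it. *)
Lemma bounded_cv_subseq (a : nat -> R) M : (forall k, Rabs (a k) <= M) ->
  exists phi l, strict_incr phi /\ Un_cv (fun k => a (phi k)) l.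
Proof.
  intros HM.
  destruct (Bolzano_Weierstrass a (fun c => -M <= c <= M) (compact_P3 (-M) M)) as [l Hl].
  { intros k. apply Rabs_le_iff, HM. }
  assert (Hclose : forall N e, exists q, (N <= q)%nat /\ Rabs (a q - l) < / INR (S e)).
  { intros N e.
    assert (Hpos : 0 < / INR (S e)) by (apply Rinv_0_lt_compat, lt_0_INR; lia).
    destruct (Hl (disc l (mkposreal _ Hpos)) N) as [q Hq]; [|now exists q].
    exists (mkposreal _ Hpos). now intros z Hz. }
  set (sel := fun N e => proj1_sig (constructive_indefinite_description _ (Hclose N e))).
  assert (Hsel : forall N e, (N <= sel N e)%nat /\ Rabs (a (sel N e) - l) < / INR (S e)).
  { intros. unfold sel. now destruct constructive_indefinite_description. }
  exists (diag_subseq sel), l. split.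
  - intros k. simpl. destruct (Hsel (S (diag_subseq sel k)) (S k)). lia.
  - assert (Hd : forall k, Rabs (a (diag_subseq sel k) - l) < / INR (S k))
      by (intros [|k]; apply Hsel).
    intros eps He. destruct (archimed_cor1 eps He) as [N [HN1 HN2]]. exists N.
    intros k Hk. unfold Rdist. eapply Rlt_le_trans; [apply Hd|].
    eapply Rle_trans; [|apply Rlt_le, HN1].
    apply Rinv_le_contravar; [apply lt_0_INR; lia | apply le_INR; lia].
Qed.

Lemma bounded_family_cv_subseq (a : nat -> nat -> R) M m :
  (forall k c, (c < m)%nat -> Rabs (a k c) <= M) ->
  exists phi lim, strict_incr phi /\
    forall c, (c < m)%nat -> Un_cv (fun k => a (phi k) c) (lim c).
Proof.
  induction m as [|m IH]; intros HM.
  - exists (fun k => k), (fun _ => 0). split; [intros k; lia | intros; lia].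
  - destruct IH as [phi [lim [Hphi Hlim]]]; [intros; apply HM; lia|].
    destruct (bounded_cv_subseq (fun k => a (phi k) m) M) as [psi [l [Hpsi Hl]]];
      [intros; apply HM; lia|].
    exists (fun k => phi (psi k)), (fun c => if Nat.eqb c m then l else lim c).
    split; [now apply strict_incr_comp|].
    intros c Hc. destruct (Nat.eqb_spec c m) as [->|Hne]; [exact Hl|].
    apply (Un_cv_subseq psi (fun k => a (phi k) c)); auto. apply Hlim. lia.
Qed.

Definition Un_cv_coords (p : nat) (bq : nat -> R) (wq : nat -> nat -> R)
  (b : R) (w : nat -> R) : Prop :=
  Un_cv bq b /\ forall j, (j < p)%nat -> Un_cv (fun k => wq k j) (w j).

Lemma margin_cv p x y i bq wq b w : Un_cv_coords p bq wq b w ->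
  Un_cv (fun k => margin p x y i (bq k) (wq k)) (margin p x y i b w).
Proof.
  intros [Hb Hw]. unfold margin. apply Un_cv_scal, CV_plus; auto.
  apply (Un_cv_sumR p (fun k j => x i j * wq k j)). intros. now apply Un_cv_scal, Hw.
Qed.

Lemma Fobj_cv n p x y delta l1 l2 l3 bq wq b w : 0 < delta -> Un_cv_coords p bq wq b w ->
  Un_cv (fun k => Fobj n p x y delta l1 l2 l3 (bq k) (wq k)) (Fobj n p x y delta l1 l2 l3 b w).
Proof.
  intros Hd Hcv. pose proof Hcv as [Hb Hw]. unfold Fobj, fobj, norm1, sqnorm.
  repeat apply CV_plus; apply Un_cv_scal.
  - apply (Un_cv_sumR n (fun k i => phiH delta (margin p x y i (bq k) (wq k)))). intros i _.
    apply (Un_cv_lipschitz (phiH delta) 1); [lra | intros; now apply phiH_lipschitz |].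
    now apply margin_cv.
  - apply (Un_cv_sumR p (fun k j => Rabs (wq k j))). intros. now apply cv_cvabs, Hw.
  - apply (Un_cv_sumR p (fun k j => wq k j ^ 2)). intros. now apply Un_cv_sqr, Hw.
  - now apply Un_cv_sqr.
Qed.

Lemma grad_w_cv n p x y delta bq wq b w j : 0 < delta -> Un_cv_coords p bq wq b w ->
  Un_cv (fun k => grad_w n p x y delta (bq k) (wq k) j) (grad_w n p x y delta b w j).
Proof.
  intros Hd Hcv. unfold grad_w. apply Un_cv_scal.
  apply (Un_cv_sumR n (fun k i => y i * x i j * dphiH delta (margin p x y i (bq k) (wq k)))).
  intros i _. apply Un_cv_scal.
  apply (Un_cv_lipschitz (dphiH delta) (/ delta));
    [apply Rlt_le, Rinv_0_lt_compat; lra | intros; now apply dphiH_lipschitz |].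
  now apply margin_cv.
Qed.

Lemma sqdist_cv p bq wq b w b' w' : Un_cv_coords p bq wq b w ->
  Un_cv (fun k => sqdist p (bq k) (wq k) b' w') (sqdist p b w b' w').
Proof.
  intros [Hb Hw]. unfold sqdist. apply CV_plus.
  - apply Un_cv_sqr, CV_minus; auto using Un_cv_const.
  - apply (Un_cv_sumR p (fun k j => (wq k j - w' j) ^ 2)). intros.
    apply Un_cv_sqr, CV_minus; auto using Un_cv_const.
Qed.

Lemma sign_pos t : 0 < t -> sign t = 1.
Proof. intros. unfold sign. destruct (Rlt_dec 0 t); [reflexivity | lra]. Qed.

Lemma sign_neg t : t < 0 -> sign t = -1.
Proof. intros. unfold sign. destruct (Rlt_dec 0 t); [lra|]. destruct (Rlt_dec t 0); [reflexivity | lra]. Qed.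

Lemma sign_mult_pos a t : 0 < a -> sign (a * t) = sign t.
Proof.
  intros Ha. destruct (Rtotal_order t 0) as [Ht|[->|Ht]].
  - rewrite !sign_neg; nra.
  - now rewrite Rmult_0_r.
  - rewrite !sign_pos; nra.
Qed.

Lemma sign_eventually_eq a c : Un_cv a c -> c <> 0 ->
  exists N, forall k, (N <= k)%nat -> sign (a k) = sign c.
Proof.
  intros Ha Hc. destruct (Ha (Rabs c)) as [N HN]; [now apply Rabs_pos_lt|].
  exists N. intros k Hk. specialize (HN k Hk). unfold Rdist in HN.
  revert HN. unfold Rabs. repeat destruct Rcase_abs; intros;
    first [rewrite !sign_pos by lra | rewrite !sign_neg by lra]; reflexivity || lra.
Qed.

Lemma shrink_eventually_zero l1 a c : 0 < l1 -> Un_cv a c -> Rabs c < l1 ->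
  exists N, forall k, (N <= k)%nat -> shrink l1 (a k) = 0.
Proof.
  intros Hl1 Ha Hc. destruct (Ha (l1 - Rabs c)) as [N HN]; [lra|].
  exists N. intros k Hk. specialize (HN k Hk). unfold Rdist in HN.
  pose proof (Rabs_triang_inv (a k) c).
  destruct (shrink_cases l1 (a k) Hl1) as [[H1 _]|[[H1 _]|[_ ->]]]; [| |reflexivity];
    exfalso; [rewrite (Rabs_pos_eq (a k)) in * | rewrite (Rabs_left (a k)) in *]; lra.
Qed.

Section ProximalGradient.

Variables (n p : nat) (x : nat -> nat -> R) (y : nat -> R) (l1 l2 l3 delta : R).
Hypothesis Hn : (0 < n)%nat.
Hypothesis Hy : forall i, (i < n)%nat -> y i = 1 \/ y i = -1.
Hypotheses (Hl1 : 0 < l1) (Hl2 : 0 <= l2) (Hl3 : 0 < l3) (Hdelta : 0 < delta).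

Local Notation L := (Lf n p x y delta).
Local Notation F := (Fobj n p x y delta l1 l2 l3).

Definition step_arg (b : R) (w : nat -> R) (j : nat) : R :=
  L * w j - grad_w n p x y delta b w j.

Definition pg_b (b : R) (w : nat -> R) : R := (L * b - grad_b n p x y delta b w) / (L + l3).

Definition pg_w (b : R) (w : nat -> R) (j : nat) : R := / (L + l2) * shrink l1 (step_arg b w j).

Lemma L_pos : 0 < L.
Proof. now apply Lf_pos. Qed.

Lemma hfun_step_arg b w j : hfun n p x y delta l2 b w j = / (L + l2) * step_arg b w j.
Proof. pose proof L_pos. unfold hfun, gradQ_w, step_arg. field. lra. Qed.

Lemma gradQ_w_step_arg b w j :
  gradQ_w n p x y delta l2 b w j = (L + l2) * w j - step_arg b w j.
Proof. unfold gradQ_w, step_arg. ring. Qed.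

(* The three-point inequality of proximal gradient (Beck-Teboulle): combine the
   upper quadratic bound of f at the new point, its tangent lower bound at [bz, wz],
   and the variational characterization of both proximal steps. *)
Lemma pg_three_point b w b' w' bz wz :
  b' = pg_b b w -> (forall j, (j < p)%nat -> w' j = pg_w b w j) ->
  L / 2 * (sqdist p b' w' bz wz - sqdist p b w bz wz) <= F bz wz - F b' w'.
Proof.
  intros Hb' Hw'. pose proof L_pos as HL.
  set (gb := grad_b n p x y delta b w). set (gw := grad_w n p x y delta b w).
  destruct (fobj_tangent_bounds n p x y delta b w bz wz Hn Hy Hdelta) as [Hlow _].
  destruct (fobj_tangent_bounds n p x y delta b w b' w' Hn Hy Hdelta) as [_ Hup].
  fold gb gw in Hlow, Hup.
  pose proof (ridge_prox_ineq l3 L (L * b - gb) bz ltac:(lra) ltac:(lra)) as Pb.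
  simpl in Pb. unfold pg_b in Hb'. fold gb in Hb'. rewrite <- Hb' in Pb.
  assert (Pw : sumR p (fun j => L / 2 * ((w' j - wz j) ^ 2 - (w j - wz j) ^ 2)) <=
     sumR p (fun j => gw j * (wz j - w j) - gw j * (w' j - w j) - L / 2 * (w' j - w j) ^ 2
        + (l1 * Rabs (wz j) + l2 / 2 * wz j ^ 2) - (l1 * Rabs (w' j) + l2 / 2 * w' j ^ 2))).
  { apply sumR_le. intros j Hj.
    pose proof (shrink_prox_ineq l1 l2 L (L * w j - gw j) (wz j) Hl1 Hl2 ltac:(lra)) as P.
    assert (Hwj : w' j = / (L + l2) * shrink l1 (L * w j - gw j)) by now rewrite Hw'.
    simpl in P. rewrite <- Hwj in P. nra. }
  repeat (rewrite sumR_minus in Pw || rewrite sumR_plus in Pw || rewrite sumR_scal_l in Pw).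
  unfold Fobj, sqdist, norm1, sqnorm in *. nra.
Qed.

Section Minimizer.

Variables (bs : R) (ws : nat -> R).
Hypothesis Hmin : forall b w, F bs ws <= F b w.

Lemma minimizer_fixed_point j : (j < p)%nat -> ws j = pg_w bs ws j.
Proof.
  intros Hj. pose proof L_pos.
  pose proof (pg_three_point bs ws (pg_b bs ws) (pg_w bs ws) bs ws eq_refl (fun _ _ => eq_refl)) as P.
  rewrite (sqdist_eq0 p bs ws bs ws) in P by reflexivity.
  pose proof (Hmin (pg_b bs ws) (pg_w bs ws)).
  pose proof (sqdist_w_le p (pg_b bs ws) (pg_w bs ws) bs ws j Hj).
  pose proof (pow2_ge_0 (pg_w bs ws j - ws j)).
  symmetry. apply Rminus_diag_uniq, Rsqr_0_uniq. unfold Rsqr. nra.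
Qed.

Lemma minimizer_gradQ_w j : (j < p)%nat ->
  gradQ_w n p x y delta l2 bs ws j = shrink l1 (step_arg bs ws j) - step_arg bs ws j.
Proof.
  intros Hj. pose proof L_pos. rewrite gradQ_w_step_arg, (minimizer_fixed_point j Hj).
  unfold pg_w. field. lra.
Qed.

Lemma minimizer_support j : (j < p)%nat -> ws j <> 0 ->
  Rabs (gradQ_w n p x y delta l2 bs ws j) = l1.
Proof.
  intros Hj Hne. rewrite (minimizer_gradQ_w j Hj).
  rewrite (minimizer_fixed_point j Hj) in Hne. unfold pg_w in Hne.
  destruct (shrink_cases l1 (step_arg bs ws j) Hl1) as [[_ ->]|[[_ ->]|[_ Hs]]].
  - replace (_ - l1 - _) with (- l1) by ring. rewrite Rabs_Ropp. apply Rabs_pos_eq. lra.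
  - replace (_ + l1 - _) with l1 by ring. apply Rabs_pos_eq. lra.
  - exfalso. apply Hne. rewrite Hs. ring.
Qed.

Lemma minimizer_zero_on_inactive j : (j < p)%nat ->
  Rabs (gradQ_w n p x y delta l2 bs ws j) < l1 -> ws j = 0.
Proof.
  intros Hj Hlt. destruct (Req_dec (ws j) 0) as [|Hne]; [assumption|].
  rewrite (minimizer_support j Hj Hne) in Hlt. lra.
Qed.

Lemma minimizer_inactive_step_arg j : (j < p)%nat ->
  Rabs (gradQ_w n p x y delta l2 bs ws j) < l1 -> Rabs (step_arg bs ws j) < l1.
Proof.
  intros Hj Hlt. pose proof (minimizer_zero_on_inactive j Hj Hlt) as Hz.
  rewrite gradQ_w_step_arg, Hz, Rmult_0_r, Rminus_0_l, Rabs_Ropp in Hlt. exact Hlt.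
Qed.

Lemma minimizer_active_step_arg j : (j < p)%nat ->
  Rabs (gradQ_w n p x y delta l2 bs ws j) = l1 -> step_arg bs ws j <> 0.
Proof.
  intros Hj Heq Hz. rewrite (minimizer_gradQ_w j Hj), Hz in Heq.
  destruct (shrink_cases l1 0 Hl1) as [[? _]|[[? _]|[_ Hs]]]; try lra.
  rewrite Hs, Rminus_0_r, Rabs_R0 in Heq. lra.
Qed.

Section Iterates.

Hypothesis Huniq : forall b w, (forall b' w', F b w <= F b' w') ->
  b = bs /\ (forall j, (j < p)%nat -> w j = ws j).

Variables (bk : nat -> R) (wk : nat -> nat -> R).
Hypothesis Hstep_b : forall k, bk (S k) = pg_b (bk k) (wk k).
Hypothesis Hstep_w : forall k j, (j < p)%nat -> wk (S k) j = pg_w (bk k) (wk k) j.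

Local Notation D k := (sqdist p (bk k) (wk k) bs ws).

Lemma iterates_three_point k : L / 2 * (D (S k) - D k) <= F bs ws - F (bk (S k)) (wk (S k)).
Proof. apply pg_three_point; auto. Qed.

Lemma iterates_sqdist_nonincreasing k : D (S k) <= D k.
Proof.
  pose proof L_pos. pose proof (iterates_three_point k). pose proof (Hmin (bk (S k)) (wk (S k))).
  nra.
Qed.

Lemma iterates_sqdist_cv : exists r, Un_cv (fun k => D k) r.
Proof.
  apply nonincreasing_bounded_cv; intros.
  - apply iterates_sqdist_nonincreasing.
  - apply sqdist_nonneg.
Qed.

Lemma iterates_Fobj_cv : Un_cv (fun k => F (bk k) (wk k)) (F bs ws).
Proof.
  destruct iterates_sqdist_cv as [r Hr].
  apply (CV_shift _ 1), (Un_cv_ext (fun k => F (bk (S k)) (wk (S k)))).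
  { intros k. now rewrite Nat.add_1_r. }
  apply (Un_cv_squeeze _ (fun k => L / 2 * (D k - D (S k)))).
  - intros k. pose proof (iterates_three_point k). pose proof (Hmin (bk (S k)) (wk (S k))). lra.
  - replace 0 with (L / 2 * (r - r)) by ring. apply Un_cv_scal, CV_minus; [exact Hr|].
    apply (Un_cv_ext (fun k => D (k + 1)%nat)); [intros; now rewrite Nat.add_1_r|].
    exact (CV_shift' (fun k => D k) 1 r Hr).
Qed.

(* The iterates stay in the ball of radius sqrt(D 0) around the minimizer. *)
Lemma iterates_cluster_point : exists phi b w,
  strict_incr phi /\ Un_cv_coords p (fun k => bk (phi k)) (fun k => wk (phi k)) b w.
Proof.
  set (a := fun k c => match c with O => bk k - bs | S j => wk k j - ws j end).
  assert (Hsmall : forall t, t ^ 2 <= D O -> Rabs t <= 1 + D O).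
  { intros t Ht. rewrite <- pow2_abs in Ht. pose proof (Rabs_pos t). nra. }
  destruct (bounded_family_cv_subseq a (1 + D O) (S p)) as [phi [lim [Hphi Hlim]]].
  { intros k [|j] Hc; apply Hsmall; eapply Rle_trans;
      try apply (nonincreasing_le_first (fun k => D k) iterates_sqdist_nonincreasing k).
    - apply sqdist_b_le.
    - apply sqdist_w_le. lia. }
  exists phi, (lim O + bs), (fun j => lim (S j) + ws j). split; [exact Hphi|]. split.
  - apply (Un_cv_ext (fun k => a (phi k) O + bs)); [intros; simpl; ring|].
    apply CV_plus; [apply Hlim; lia | apply Un_cv_const].
  - intros j Hj. apply (Un_cv_ext (fun k => a (phi k) (S j) + ws j)); [intros; simpl; ring|].
    apply CV_plus; [apply Hlim; lia | apply Un_cv_const].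
Qed.

(* F need not be strongly convex in w (l2 may vanish): convergence of the
   iterates comes from a cluster point, which minimizes F by continuity and is
   therefore the minimizer by uniqueness. *)
Lemma iterates_cv : Un_cv_coords p bk wk bs ws.
Proof.
  destruct iterates_sqdist_cv as [r Hr].
  destruct iterates_cluster_point as [phi [b [w [Hphi Hcv]]]].
  assert (HFw : F b w = F bs ws).
  { apply (UL_sequence (fun k => F (bk (phi k)) (wk (phi k)))).
    - now apply Fobj_cv.
    - now apply (Un_cv_subseq phi (fun k => F (bk k) (wk k))), iterates_Fobj_cv. }
  destruct (Huniq b w) as [Eb Ew]; [intros; rewrite HFw; apply Hmin|].
  assert (Hr0 : r = 0).
  { apply (UL_sequence (fun k => D (phi k))).
    - now apply (Un_cv_subseq phi (fun k => D k)).
    - rewrite <- (sqdist_eq0 p b w bs ws Eb Ew). now apply sqdist_cv. }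
  subst r. split.
  - apply (Un_cv_of_sqr_le _ _ (fun k => D k)); [intros; apply sqdist_b_le | exact Hr].
  - intros j Hj. apply (Un_cv_of_sqr_le _ _ (fun k => D k)); [intros; now apply sqdist_w_le | exact Hr].
Qed.

Lemma iterates_step_arg_cv j : (j < p)%nat ->
  Un_cv (fun k => step_arg (bk k) (wk k) j) (step_arg bs ws j).
Proof.
  intros Hj. unfold step_arg. apply CV_minus.
  - apply Un_cv_scal, iterates_cv, Hj.
  - apply grad_w_cv; [exact Hdelta | exact iterates_cv].
Qed.

Lemma iterates_zero_on_inactive j : (j < p)%nat ->
  Rabs (gradQ_w n p x y delta l2 bs ws j) < l1 ->
  exists N, forall k, (N <= k)%nat -> wk k j = 0.
Proof.
  intros Hj Hlt.
  destruct (shrink_eventually_zero l1 _ _ Hl1 (iterates_step_arg_cv j Hj)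
              (minimizer_inactive_step_arg j Hj Hlt)) as [N HN].
  exists (S N). intros [|k] Hk; [lia|].
  rewrite Hstep_w by exact Hj. unfold pg_w. rewrite HN by lia. ring.
Qed.

Lemma iterates_sign_on_active j : (j < p)%nat ->
  Rabs (gradQ_w n p x y delta l2 bs ws j) = l1 ->
  exists N, forall k, (N <= k)%nat ->
    sign (hfun n p x y delta l2 (bk k) (wk k) j) = sign (hfun n p x y delta l2 bs ws j).
Proof.
  intros Hj Heq. pose proof L_pos.
  destruct (sign_eventually_eq _ _ (iterates_step_arg_cv j Hj)
              (minimizer_active_step_arg j Hj Heq)) as [N HN].
  exists N. intros k Hk.
  rewrite !hfun_step_arg, !sign_mult_pos by (apply Rinv_0_lt_compat; lra).
  now apply HN.
Qed.

Lemma iterates_identify_active_set : exists K, forall k, (K <= k)%nat ->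
  (forall j, (j < p)%nat -> Rabs (gradQ_w n p x y delta l2 bs ws j) < l1 -> wk k j = 0) /\
  (forall j, (j < p)%nat -> Rabs (gradQ_w n p x y delta l2 bs ws j) = l1 ->
     sign (hfun n p x y delta l2 (bk k) (wk k) j) = sign (hfun n p x y delta l2 bs ws j)).
Proof.
  destruct (eventually_forall_lt p (fun j k =>
     (Rabs (gradQ_w n p x y delta l2 bs ws j) < l1 -> wk k j = 0) /\
     (Rabs (gradQ_w n p x y delta l2 bs ws j) = l1 ->
        sign (hfun n p x y delta l2 (bk k) (wk k) j) = sign (hfun n p x y delta l2 bs ws j))))
    as [K HK].
  - intros j Hj.
    destruct (Rlt_dec (Rabs (gradQ_w n p x y delta l2 bs ws j)) l1) as [Hlt|Hge].
    + destruct (iterates_zero_on_inactive j Hj Hlt) as [N HN].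
      exists N. intros k Hk. split; [intros; now apply HN | lra].
    + destruct (Req_dec (Rabs (gradQ_w n p x y delta l2 bs ws j)) l1) as [Heq|Hne];
        [|exists O; intros; split; intros; lra].
      destruct (iterates_sign_on_active j Hj Heq) as [N HN].
      exists N. intros k Hk. split; [lra | intros; now apply HN].
  - exists K. intros k Hk. split; intros j Hj; now apply HK.
Qed.

End Iterates.
End Minimizer.
End ProximalGradient.

Theorem lemma1
  (n p : nat) (x : nat -> nat -> R) (y : nat -> R)
  (l1 l2 l3 delta : R)
  (Hn : (0 < n)%nat)
  (Hy : forall i, (i < n)%nat -> y i = 1 \/ y i = -1)
  (Hl1 : 0 < l1) (Hl2 : 0 <= l2) (Hl3 : 0 < l3) (Hdelta : 0 < delta)
  (bs : R) (ws : nat -> R)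
  (Hmin : forall b w, Fobj n p x y delta l1 l2 l3 bs ws <= Fobj n p x y delta l1 l2 l3 b w)
  (Huniq : forall b w,
      (forall b' w', Fobj n p x y delta l1 l2 l3 b w <= Fobj n p x y delta l1 l2 l3 b' w') ->
      b = bs /\ (forall j, (j < p)%nat -> w j = ws j))
  (bk : nat -> R) (wk : nat -> nat -> R)
  (Hb : forall k, (1 <= k)%nat ->
      bk k = (Lf n p x y delta * bk (k - 1)%nat
              - grad_b n p x y delta (bk (k - 1)%nat) (wk (k - 1)%nat))
             / (Lf n p x y delta + l3))
  (Hw : forall k j, (1 <= k)%nat -> (j < p)%nat ->
      wk k j = / (Lf n p x y delta + l2) *
               shrink l1 (Lf n p x y delta * wk (k - 1)%nat j
                          - grad_w n p x y delta (bk (k - 1)%nat) (wk (k - 1)%nat) j)) :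
  (forall j, (j < p)%nat -> ws j <> 0 ->
      Rabs (gradQ_w n p x y delta l2 bs ws j) = l1) /\
  (forall j, (j < p)%nat -> Rabs (gradQ_w n p x y delta l2 bs ws j) < l1 -> ws j = 0) /\
  (exists K : nat, forall k, (K <= k)%nat ->
      (forall j, (j < p)%nat -> Rabs (gradQ_w n p x y delta l2 bs ws j) < l1 ->
          wk k j = 0) /\
      (forall j, (j < p)%nat -> Rabs (gradQ_w n p x y delta l2 bs ws j) = l1 ->
          sign (hfun n p x y delta l2 (bk k) (wk k) j)
          = sign (hfun n p x y delta l2 bs ws j))).
Proof.
  assert (Hstep_b : forall k, bk (S k) = pg_b n p x y l3 delta (bk k) (wk k)).
  { intros k. rewrite Hb by lia. now rewrite Nat.sub_succ, Nat.sub_0_r. }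
  assert (Hstep_w : forall k j, (j < p)%nat ->
            wk (S k) j = pg_w n p x y l1 l2 delta (bk k) (wk k) j).
  { intros k j Hj. rewrite Hw by lia. now rewrite Nat.sub_succ, Nat.sub_0_r. }
  split; [|split].
  - intros j Hj. now apply (minimizer_support n p x y l1 l2 l3 delta).
  - intros j Hj. now apply (minimizer_zero_on_inactive n p x y l1 l2 l3 delta).
  - now apply (iterates_identify_active_set n p x y l1 l2 l3 delta).
Qed.
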